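(* Let $\Omega$ be a finite set of skills over a state space $\mathcal{S}$, where each $\omega\in\Omega$ has a true initiation set $I_\omega\subseteq\mathcal{S}$ and termination set $\beta_\omega\subseteq\mathcal{S}$, and let $\mathcal{M}^*$ be a complete model for $\Omega$ realizing exactly these sets. Let $\mu$ be a probability distribution over $\mathcal{S}\times\Omega\times\mathcal{S}$. Let $\mathcal{H}$ be a finite hypothesis class of models, each $\mathcal{M}=(\mathcal{P},\mathcal{A})\in\mathcal{H}$ assigning to every $\omega\in\Omega$ a learned initiation set $\widehat I_\omega=\bigcup_{a\in\mathcal{A}_\omega}\mathcal{G}(\mathrm{Pre}_a)$ and learned termination set $\widehat\beta_\omega=\bigcup_{a\in\mathcal{A}_\omega}\big(\mathcal{G}(\mathrm{Pre}_a)\setminus\mathcal{G}(\mathrm{Eff}^-_a)\big)\cup\mathcal{G}(\mathrm{Eff}^+_a)$. For $\mathcal{M}\in\mathcal{H}$ define \[d_{\mathrm{compl}}(\mathcal{M},\mathcal{M}^* )=\Pr_{(s,\omega,s')\sim\mu}\big[(s\in\widehat I_\omega\,\triangle\, I_\omega)\vee(s'\in\widehat\beta_\omega\,\triangle\,\beta_\omega)\big].\] Let $n$ i.i.d. samples $(s_i,\omega_i,s_i')_{i=1}^n$ be drawn from $\mu$, and let $\widehat{\mathcal{M}}_n\in\mathcal{H}$ be the model learned by SkillWrapper from them, which is consistent with every sample, i.e. for all $i$: $s_i\notin\widehat I_{\omega_i}\triangle I_{\omega_i}$ and $s_i'\notin\widehat\beta_{\omega_i}\triangle\beta_{\omega_i}$.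 Then for every $\epsilon>0$, \[\Pr\big[d_{\mathrm{compl}}(\widehat{\mathcal{M}}_n,\mathcal{M}^* )\le\epsilon\big]\ge 1-|\mathcal{H}|\,e^{-n\epsilon}.\]
   Context: A model $\mathcal{M}=(\mathcal{P},\mathcal{A})$ consists of a set of predicates $\mathcal{P}$ and a set of operators $\mathcal{A}=\bigcup_{\omega}\mathcal{A}_\omega$, where $\mathcal{A}_\omega$ are the operators associated with skill $\omega$; each operator $a$ has a precondition set $\mathrm{Pre}_a$ and add/delete effect sets $\mathrm{Eff}^+_a,\mathrm{Eff}^-_a$ of predicates. The grounding function $\mathcal{G}$ maps a set of predicates to the set of low-level states in which all those predicates hold. $\triangle$ denotes symmetric difference. *)

From HB Require Import structures.
From mathcomp Require Import all_boot all_order all_algebra.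
From mathcomp Require Import all_classical all_reals all_analysis.
Set Implicit Arguments. Unset Strict Implicit. Unset Printing Implicit Defensive.
Import Order.TTheory GRing.Theory Num.Theory.
Local Open Scope classical_set_scope.
Local Open Scope ring_scope.

Definition symdiff {T : Type} (A B : set T) : set T := (A `\` B) `|` (B `\` A).

(* A (lifted) operator over a predicate universe P: precondition,
   add effects and delete effects. *)
Record operator (P : Type) := Operator {
  pre : set P ; effp : set P ; effm : set P }.

(* Predicates are drawn
   from a universe P; [preds] is the model's predicate set, [grnd p] the set of
   low-level states where predicate p holds, [ops w] the operators A_w. *)
Record model (S Om P : Type) := Model {
  preds : set P ;
  grnd : P -> set S ;
  ops : Om -> set (operator P) }.

Definition grounding {S Om P : Type} (M : model S Om P) (Q : set P) : set S :=
  [set s | forall p, Q p -> grnd M p s].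

Definition Ihat {S Om P : Type} (M : model S Om P) (w : Om) : set S :=
  \bigcup_(a in ops M w) grounding M (pre a).

Definition bhat {S Om P : Type} (M : model S Om P) (w : Om) : set S :=
  \bigcup_(a in ops M w)
     ((grounding M (pre a) `\` grounding M (effm a)) `|` grounding M (effp a)).

Definition consistent {S Om P : Type} (I beta : Om -> set S)
    (M : model S Om P) (z : S * Om * S) : Prop :=
  ~ symdiff (Ihat M z.1.2) (I z.1.2) z.1.1 /\
  ~ symdiff (bhat M z.1.2) (beta z.1.2) z.2.

Definition dcompl (dS dO : measure_display) (S : measurableType dS)
    (Om : measurableType dO) (P : Type) (R : realType)
    (mu : probability (S * Om * S)%type R) (I beta : Om -> set S)
    (M : model S Om P) : \bar R :=
  mu [set z | ~ consistent I beta M z].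

Definition iid (dT dZ : measure_display) (T : measurableType dT)
    (Z : measurableType dZ) (R : realType) (Pr : probability T R)
    (mu : probability Z R) (n : nat) (X : 'I_n -> T -> Z) : Prop :=
  (forall i, measurable_fun setT (X i)) /\
  (forall i (A : set Z), measurable A -> Pr (X i @^-1` A) = mu A) /\
  (forall A : 'I_n -> set Z, (forall i, measurable (A i)) ->
     Pr (\bigcap_(i in [set: 'I_n]) (X i @^-1` A i)) =
     (\prod_(i < n) Pr (X i @^-1` A i))%E).

From HB Require Import structures.
From mathcomp Require Import all_boot all_order all_algebra.
From mathcomp Require Import all_classical all_reals all_analysis.
From mathcomp Require Import lra.
Set Implicit Arguments. Unset Strict Implicit. Unset Printing Implicit Defensive.
Import Order.TTheory GRing.Theory Num.Theory.
Local Open Scope classical_set_scope.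
Local Open Scope ring_scope.

(* A model h with d_compl(h) > eps agrees with one sample with probability
   1 - d_compl(h) < 1 - eps <= e^-eps, hence with n independent samples with
   probability at most e^(-n eps).  The learned model agrees with all samples,
   so it is such a bad model with probability at most the sum of these bounds
   over the |H| hypotheses. *)

Lemma exprn_le_expRN (R : realType) (c e : R) (n : nat) :
  0 <= c -> c <= 1 - e -> c ^+ n <= expR (- (n%:R * e)).
Proof.
move=> c_ge0 c_le; rewrite -mulrN expRM_natl.
apply: lerXn2r; rewrite ?nnegrE ?expR_ge0 //.
by apply: le_trans (expR_ge1Dx _); lra.
Qed.

Lemma measurable_preimage_setT d1 d2 (A : measurableType d1)
    (B : measurableType d2) (f : A -> B) (Y : set B) :
  measurable_fun setT f -> measurable Y -> measurable (f @^-1` Y).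
Proof. by move=> mf mY; rewrite -[_ @^-1` _]setTI; exact: mf. Qed.

Section FinitelyValued.
Context d (T : measurableType d) (H : finType) (f : T -> H).
Hypothesis measurable_fiber : forall h, measurable (f @^-1` [set h]).

Lemma measurable_fin_preimage (B : set H) : measurable (f @^-1` B).
Proof.
have -> : f @^-1` B = \bigcup_(h in B) f @^-1` [set h].
  by apply/seteqP; split=> [t Bt | t [h Bh /= ->]] //; exists (f t).
by apply: fin_bigcup_measurable => //; exact: finite_finset.
Qed.

Lemma content_preimage_le_card (R : realType)
    (mu : {content set T -> \bar R}) (B : set H) (k : R) :
    0 <= k -> (forall h, B h -> (mu (f @^-1` [set h]) <= k%:E)%E) ->
  (mu (f @^-1` B) <= (#|H|%:R * k)%:E)%E.
Proof.
move=> k_ge0 fiber_le.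
have -> : f @^-1` B = \bigcup_(h in [set: H]) (f @^-1` [set h] `&` f @^-1` B).
  by apply/seteqP; split=> [t Bt | t [h _ []]] //; exists (f t).
rewrite measure_fin_bigcup //; first last.
- by move=> h _; apply: measurableI; exact: measurable_fin_preimage.
- by move=> h h' _ _ [t [[/= <-] _] [/= <-] _].
- exact: finite_finset.
rewrite (fsbigE (enum H)) ?enum_uniq //; last by move=> h _; rewrite mem_enum.
rewrite big_enum_cond /=.
have part_le h : (mu (f @^-1` [set h] `&` f @^-1` B) <= k%:E)%E.
  have [Bh | nBh] := pselect (B h).
    apply: le_trans (fiber_le h Bh); apply: le_measure; last exact: subIsetl.
    - by rewrite inE; apply: measurableI; exact: measurable_fin_preimage.
    - by rewrite inE.
  rewrite [X in mu X](_ : _ = set0) ?measure0 ?lee_fin //.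
  by apply/seteqP; split=> t // [/= ->].
apply: (@le_trans _ _ (\sum_(h in [set: H]) k%:E)%E); first exact: lee_sum.
by rewrite sumEFin lee_fin sumr_const mulr_natl (eq_card in_setT).
Qed.

End FinitelyValued.

Section IndependentSamples.
Context dT dZ (T : measurableType dT) (Z : measurableType dZ) (R : realType).
Context (Pr : probability T R) (mu : probability Z R).
Context (n : nat) (X : 'I_n -> T -> Z).
Hypothesis X_iid : iid Pr mu X.

Lemma measurable_bigcap_preimage (A : set Z) : measurable A ->
  measurable (\bigcap_(i in [set: 'I_n]) X i @^-1` A).
Proof.
move=> mA; apply: fin_bigcap_measurable => [|i _]; first exact: finite_finset.
exact: measurable_preimage_setT (X_iid.1 i) mA.
Qed.

Lemma iid_bigcap_preimage (A : set Z) : measurable A ->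
  Pr (\bigcap_(i in [set: 'I_n]) X i @^-1` A) = (mu A ^+ n)%E.
Proof.
move=> mA; have [_ [X_law X_indep]] := X_iid.
rewrite (X_indep (fun=> A)) //; under eq_bigr do rewrite X_law //.
by rewrite big_const_ord iter_mule mule1.
Qed.

Lemma iid_bigcap_preimage_le_expRN (A : set Z) (e : R) :
    measurable A -> (e%:E < mu (~` A))%E ->
  (Pr (\bigcap_(i in [set: 'I_n]) X i @^-1` A) <=
     (expR (- (n%:R * e)))%:E)%E.
Proof.
move=> mA; rewrite iid_bigcap_preimage // probability_setC //.
rewrite -(fineK (fin_num_measure mu _ mA)) -EFinB -EFin_expe lte_fin lee_fin.
move=> lt_e; apply: exprn_le_expRN; first by rewrite fine_ge0 ?measure_ge0.
by lra.
Qed.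

End IndependentSamples.

Lemma measurable_symdiff d (T : measurableType d) (A B : set T) :
  measurable A -> measurable B -> measurable (symdiff A B).
Proof. by move=> mA mB; apply: measurableU; exact: measurableD. Qed.

Lemma measurable_consistent dS dO (S : measurableType dS)
    (Om : measurableType dO) (P : Type) (I beta : Om -> set S)
    (M : model S Om P) :
    finite_set [set: Om] -> (forall w : Om, measurable [set w]) ->
    (forall w, measurable (I w)) -> (forall w, measurable (beta w)) ->
    (forall w, measurable (Ihat M w)) -> (forall w, measurable (bhat M w)) ->
  measurable [set z | consistent I beta M z].
Proof.
move=> Om_fin Om_sing mI mbeta mIhat mbhat.
have -> : [set z | consistent I beta M z] =
    \bigcup_(w in [set: Om]) (
      (fun z : S * Om * S => z.1.2) @^-1` [set w] `&`
      (fun z : S * Om * S => z.1.1) @^-1` (~` symdiff (Ihat M w) (I w)) `&`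
      (fun z : S * Om * S => z.2) @^-1` (~` symdiff (bhat M w) (beta w))).
  apply/seteqP; split=> [z [zI zb] | z [w _ [[/= <-]]]] //.
  by exists z.1.2.
apply: fin_bigcup_measurable => // w _.
have m_fst_fst : measurable_fun setT (fun z : S * Om * S => z.1.1).
  exact: measurableT_comp measurable_fst measurable_fst.
have m_snd_fst : measurable_fun setT (fun z : S * Om * S => z.1.2).
  exact: measurableT_comp measurable_snd measurable_fst.
apply: measurableI; first apply: measurableI; apply: measurable_preimage_setT.
- exact: m_snd_fst.
- exact: Om_sing.
- exact: m_fst_fst.
- by apply: measurableC; exact: measurable_symdiff.
- exact: measurable_snd.
- by apply: measurableC; exact: measurable_symdiff.
Qed.

Theorem mainTheorem2
  (R : realType)
  (dS dO dT : measure_display)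
  (S : measurableType dS)              (* state space *)
  (Om : measurableType dO)             (* skills *)
  (P : Type)                           (* universe of predicates *)
  (T : measurableType dT) (Pr : probability T R)  (* underlying sample space *)
  (Om_fin : finite_set [set: Om])
  (Om_sing : forall w : Om, measurable [set w])
  (I beta : Om -> set S)               (* true initiation / termination sets *)
  (I_meas : forall w, measurable (I w))
  (beta_meas : forall w, measurable (beta w))
  (Mstar : model S Om P)
  (Mstar_real : forall w, Ihat Mstar w = I w /\ bhat Mstar w = beta w)
  (mu : probability (S * Om * S)%type R)
  (H : finType) (models : H -> model S Om P)   (* finite hypothesis class *)
  (models_inj : injective models)
  (models_meas : forall h w, measurable (Ihat (models h) w) /\
                             measurable (bhat (models h) w))
  (n : nat) (X : 'I_n -> T -> (S * Om * S)%type)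
  (X_iid : iid Pr mu X)
  (Mhat : T -> H)                      (* learned model, as a function of the samples *)
  (Mhat_meas : forall h, measurable (Mhat @^-1` [set h]))
  (Mhat_cons : forall t i, consistent I beta (models (Mhat t)) (X i t))
  (eps : R) (eps_pos : 0 < eps) :
  ((1 - #|H|%:R * expR (- (n%:R * eps)))%:E <=
     Pr [set t | (dcompl mu I beta (models (Mhat t)) <= eps%:E)%E])%E.
Proof.
set good := [set h | (dcompl mu I beta (models h) <= eps%:E)%E].
have consistent_meas h : measurable [set z | consistent I beta (models h) z].
  by apply: measurable_consistent => // w; have [] := models_meas h w.
have bad_fiber h : ~ good h ->
    (Pr (Mhat @^-1` [set h]) <= (expR (- (n%:R * eps)))%:E)%E.
  move=> /negP; rewrite -ltNge => bad_h.
  apply: le_trans (iid_bigcap_preimage_le_expRN X_iid (consistent_meas h) bad_h).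
  apply: le_measure; rewrite ?inE.
  - exact: Mhat_meas.
  - exact: (measurable_bigcap_preimage X_iid (consistent_meas h)).
  - by move=> t /= <- i _; exact: Mhat_cons.
have bad_le := content_preimage_le_card Mhat_meas (expR_ge0 _) bad_fiber.
rewrite -[X in Pr X]/(Mhat @^-1` good) -[X in Pr X]setCK probability_setC.
  by rewrite EFinB; exact: leeB bad_le.
by apply: measurableC; exact: measurable_fin_preimage.
Qed.
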